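(* Let $P\in\mathbb{R}_+^{n\times n}$ be a sub-stochastic out-connected matrix and $w\in\mathbb{R}^n_+$. Then for every $c\in\mathbb{R}^n$ the equation $x=S_0^w(P'x+c)$ has a unique solution $x\in\mathbb{R}^n$.
   Context: $P$ sub-stochastic: nonnegative with $P\mathbbm{1}\le\mathbbm{1}$. The graph $\mathcal G_P$ has node set $\{1,\dots,n\}$ and a directed link $(i,j)$ whenever $P_{ij}>0$. Let $\mathcal O=\{i:\,\sum_jP_{ij}<1\}$. $P$ is out-connected if $\mathcal O$ is nonempty and from every node of $\mathcal G_P$ there is a directed path to some node in $\mathcal O$. $(S_0^w(x))_i=\min\{\max\{x_i,0\},w_i\}$; $P'$ is the transpose. *)

From mathcomp Require Import all_boot all_order all_algebra.
From mathcomp Require Import reals.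
Set Implicit Arguments. Unset Strict Implicit. Unset Printing Implicit Defensive.
Import Order.TTheory GRing.Theory Num.Theory.
Local Open Scope ring_scope.

Definition substochastic {R : realType} {n : nat} (P : 'M[R]_n) : Prop :=
  (forall i j, 0 <= P i j) /\ (forall i, \sum_j P i j <= 1).

Definition linkP {R : realType} {n : nat} (P : 'M[R]_n) : rel 'I_n :=
  fun i j => 0 < P i j.

Definition outset {R : realType} {n : nat} (P : 'M[R]_n) : {set 'I_n} :=
  [set i | \sum_j P i j < 1].

Definition out_connected {R : realType} {n : nat} (P : 'M[R]_n) : Prop :=
  (outset P != set0) /\
  (forall i, exists2 o, o \in outset P & connect (linkP P) i o).

Definition S0 {R : realType} {n : nat} (w x : 'cV[R]_n) : 'cV[R]_n :=
  \col_i Num.min (Num.max (x i 0) 0) (w i 0).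

From mathcomp Require Import all_boot all_order all_algebra.
From mathcomp Require Import reals.
From mathcomp Require Import classical_sets.
From mathcomp Require Import lra.
Set Implicit Arguments. Unset Strict Implicit. Unset Printing Implicit Defensive.
Import Order.TTheory GRing.Theory Num.Theory.
Local Open Scope ring_scope.

(* Existence: x |-> S0 w (P^T x + c) is monotone with values in the box
   [0, w], so the supremum of its post-fixed points is a fixed point
   (Knaster-Tarski).  Uniqueness: for two fixed points x, y the vector
   d = |x - y| satisfies d <= P^T d.  Summing over the entries, P^T cannot
   increase the total mass of d, so d = P^T d and d vanishes on every row of
   P with sum < 1; the identity d = P^T d then propagates these zeros
   backwards along the links of G_P, which by out-connectedness reach every
   node. *)

Definition le_cV {R : numDomainType} {n : nat} (x y : 'cV[R]_n) : Prop :=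
  forall i, x i 0 <= y i 0.

Section ClampLipschitz.
Variable R : realDomainType.

Lemma ler_dist_maxl (c a b : R) : `|Num.max a c - Num.max b c| <= `|a - b|.
Proof.
rewrite ler_norml; have := ler_norm (a - b); have := ler_norm (b - a).
by rewrite distrC; case: (leP a c); case: (leP b c) => *; apply/andP; split; lra.
Qed.

Lemma ler_dist_minl (c a b : R) : `|Num.min a c - Num.min b c| <= `|a - b|.
Proof.
rewrite ler_norml; have := ler_norm (a - b); have := ler_norm (b - a).
by rewrite distrC; case: (leP a c); case: (leP b c) => *; apply/andP; split; lra.
Qed.

End ClampLipschitz.

Section S0Properties.
Variables (R : realType) (n : nat) (w : 'cV[R]_n).

Lemma S0_mono (x y : 'cV[R]_n) : le_cV x y -> le_cV (S0 w x) (S0 w y).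
Proof. by move=> xy i; rewrite !mxE le_min2 // le_max2. Qed.

Lemma S0_ge0 (x : 'cV[R]_n) : (forall i, 0 <= w i 0) -> le_cV 0 (S0 w x).
Proof. by move=> w_ge0 i; rewrite !mxE le_min w_ge0 le_max lexx orbT. Qed.

Lemma S0_le (x : 'cV[R]_n) : le_cV (S0 w x) w.
Proof. by move=> i; rewrite mxE ge_min lexx orbT. Qed.

Lemma S0_dist (x y : 'cV[R]_n) i :
  `|S0 w x i 0 - S0 w y i 0| <= `|x i 0 - y i 0|.
Proof. by rewrite !mxE (le_trans (ler_dist_minl _ _ _)) ?ler_dist_maxl. Qed.

End S0Properties.

Section NonnegativeMatrix.
Variables (R : realDomainType) (m n : nat) (A : 'M[R]_(m, n)).
Hypothesis A_ge0 : forall i j, 0 <= A i j.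

Lemma nonneg_mulmx_mono (x y : 'cV[R]_n) : le_cV x y -> le_cV (A *m x) (A *m y).
Proof.
by move=> xy i; rewrite !mxE; apply: ler_sum => j _; apply: ler_wpM2l.
Qed.

Lemma nonneg_mulmx_norm (v : 'cV[R]_n) i :
  `|(A *m v) i 0| <= (A *m map_mx Num.norm v) i 0.
Proof.
rewrite !mxE (le_trans (ler_norm_sum _ _ _)) //.
by apply: ler_sum => j _; rewrite mxE normrM ger0_norm.
Qed.

End NonnegativeMatrix.

Section KnasterTarski.
Variables (R : realType) (n : nat) (F : 'cV[R]_n -> 'cV[R]_n) (hi : 'cV[R]_n).
Hypothesis F_mono : forall x y, le_cV x y -> le_cV (F x) (F y).
Hypothesis F_le : forall x, le_cV (F x) hi.
Hypothesis F_post : exists x0, le_cV x0 (F x0).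

Lemma monotone_bounded_fixpoint : exists x, F x = x.
Proof.
pose E j := [set x j 0 | x in [set x | le_cV x (F x)]]%classic.
have E_sup j : has_sup (E j).
  split; first by have [x0 hx0] := F_post; exists (x0 j 0), x0.
  by exists (hi j 0) => _ [x hx <-]; apply: le_trans (hx j) (F_le x j).
pose xs := \col_j sup (E j).
have xs_ub x : le_cV x (F x) -> le_cV x xs.
  by move=> hx j; rewrite mxE; apply: sup_upper_bound (E_sup j) _ _; exists x.
have xs_post : le_cV xs (F xs).
  move=> j; rewrite [X in X <= _]mxE; apply: ge_sup; first by case: (E_sup j).
  by move=> _ [x hx <-]; apply: le_trans (hx j) (F_mono (xs_ub x hx) j).
have xs_pre : le_cV (F xs) xs by apply/xs_ub/F_mono.
exists xs; apply/matrixP => i j; rewrite (ord1 j).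
by apply/eqP; rewrite eq_le xs_post xs_pre.
Qed.

End KnasterTarski.

Section SubInvariant.
Variables (R : realType) (n : nat) (P : 'M[R]_n) (d : 'cV[R]_n).
Hypothesis P_substoch : substochastic P.
Hypothesis d_ge0 : forall i, 0 <= d i 0.
Hypothesis d_sub : le_cV d (P^T *m d).

Lemma sum_trmx_mul : \sum_j (P^T *m d) j 0 = \sum_i d i 0 * \sum_j P i j.
Proof.
under eq_bigr => j _ do rewrite mxE.
rewrite exchange_big; apply: eq_bigr => i _; rewrite mulr_sumr.
by apply: eq_bigr => j _; rewrite mxE mulrC.
Qed.

Lemma out_defect_ge0 i : 0 <= d i 0 * (1 - \sum_j P i j).
Proof. by rewrite mulr_ge0 // subr_ge0; case: P_substoch. Qed.

Lemma sum_out_defect : \sum_i d i 0 * (1 - \sum_j P i j) =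
  \sum_i d i 0 - \sum_j (P^T *m d) j 0.
Proof.
by rewrite sum_trmx_mul -sumrB; apply: eq_bigr => i _; rewrite mulrBr mulr1.
Qed.

Lemma subinvariant_invariant : P^T *m d = d.
Proof.
have gap_ge0 j : predT j -> 0 <= (P^T *m d) j 0 - d j 0 by rewrite subr_ge0.
have gap0 : \sum_j ((P^T *m d) j 0 - d j 0) = 0.
  apply/eqP; rewrite eq_le sumr_ge0 // andbT sumrB subr_le0.
  by rewrite -subr_ge0 -sum_out_defect sumr_ge0 // => i _; apply: out_defect_ge0.
apply/matrixP => i j; rewrite (ord1 j); apply/eqP.
by rewrite -subr_eq0 (psumr_eq0P gap_ge0 gap0).
Qed.

Lemma subinvariant_outset_eq0 o : o \in outset P -> d o 0 = 0.
Proof.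
rewrite inE => ho.
have defect0 : \sum_i d i 0 * (1 - \sum_j P i j) = 0.
  by rewrite sum_out_defect subinvariant_invariant subrr.
have := psumr_eq0P (fun i _ => out_defect_ge0 i) defect0 (i := o) isT.
by move/eqP; rewrite mulf_eq0 subr_eq0 (gt_eqF ho) orbF => /eqP.
Qed.

Lemma subinvariant_link_eq0 i k : linkP P i k -> d k 0 = 0 -> d i 0 = 0.
Proof.
rewrite /linkP => Pik dk0; apply/eqP; rewrite eq_le d_ge0 andbT.
have : P i k * d i 0 <= d k 0.
  rewrite -{2}subinvariant_invariant mxE (bigD1 i) //= mxE lerDl.
  by apply: sumr_ge0 => l _; rewrite mxE mulr_ge0 //; case: P_substoch.
by rewrite dk0 pmulr_rle0.
Qed.

Lemma out_connected_subinvariant_eq0 : out_connected P -> d = 0.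
Proof.
move=> [_ reach_out]; apply/matrixP => i j; rewrite (ord1 j) mxE.
have [o o_out /connectP[p path_p o_last]] := reach_out i.
rewrite {}o_last in o_out; elim: p i path_p o_out => [|k p IHp] i /=.
  by move=> _; apply: subinvariant_outset_eq0.
by move=> /andP[ik path_p] o_out; apply: subinvariant_link_eq0 ik (IHp k _ _).
Qed.

End SubInvariant.

Theorem proposition3 (R : realType) (n : nat) (P : 'M[R]_n) (w : 'cV[R]_n) :
  substochastic P -> out_connected P -> (forall i, 0 <= w i 0) ->
  forall c : 'cV[R]_n, exists! x : 'cV[R]_n, x = S0 w (P^T *m x + c).
Proof.
move=> P_substoch P_out w_ge0 c.
have PT_ge0 i j : 0 <= P^T i j by rewrite mxE; case: P_substoch.
pose F x := S0 w (P^T *m x + c).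
have F_mono x y : le_cV x y -> le_cV (F x) (F y).
  move=> xy; apply: S0_mono => i; rewrite !mxE lerD2r.
  by have := nonneg_mulmx_mono PT_ge0 xy i; rewrite !mxE.
have [x Fx] := monotone_bounded_fixpoint F_mono (fun x => S0_le w _)
  (ex_intro _ 0 (S0_ge0 _ w_ge0)).
exists x; split=> // y yE.
pose d := map_mx Num.norm (x - y).
have d_sub : le_cV d (P^T *m d).
  move=> i; apply: le_trans (nonneg_mulmx_norm PT_ge0 (x - y) i).
  have -> : d i 0 = `|F x i 0 - F y i 0| by rewrite Fx /F -yE !mxE.
  have shift : P^T *m x + c - (P^T *m y + c) = P^T *m (x - y).
    by rewrite mulmxBr opprD addrACA subrr addr0.
  by rewrite -shift (le_trans (S0_dist _ _ _ _)) // !mxE.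
have d_ge0 i : 0 <= d i 0 by rewrite mxE normr_ge0.
have d0 := out_connected_subinvariant_eq0 P_substoch d_ge0 d_sub P_out.
apply/eqP; rewrite -subr_eq0; apply/eqP/matrixP => i j.
by have /matrixP/(_ i j) := d0; rewrite !mxE => /normr0_eq0.
Qed.
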